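(* For positive reals $\gamma,\sigma\le 1$, let $f_p$ be a $(\gamma,\sigma)$-distance over $\mathbb{R}^d$ scaled about a point $p\in\mathbb{R}^d$. Then there exists $\tau$, depending only on $\gamma$ and $\sigma$, such that $f_p$ is $\tau$-admissible, i.e. $\|\nabla f_p(x)\|\,\|x-p\|\le\tau f_p(x)$ and $\|\nabla^2 f_p(x)\|\,\|x-p\|^2\le\tau^2 f_p(x)$ at every point $x\ne p$ where $f_p$ is twice differentiable.
   Context: Given a closed convex body $K$ with the origin in its interior, the scaling distance about $p$ is $f_p(x)=0$ if $x=p$ and otherwise the smallest $r>0$ with $(x-p)/r\in K$. $K$ is centrally $\gamma$-fat if there are Euclidean balls $B\subseteq K\subseteq B'$ centered at the origin with $\mathrm{radius}(B)/\mathrm{radius}(B')\ge\gamma$; $K$ is $\sigma$-smooth if every boundary point $x$ of $K$ lies on the boundary of some closed Euclidean ball of diameter $\sigma\cdot\mathrm{diam}(K)$ contained in $K$. $f_p$ is a $(\gamma,\sigma)$-distance if its unit ball $K$ is centrally $\gamma$-fat and $\sigma$-smooth. Norms are Euclidean (spectral for matrices). *)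

From mathcomp Require Import all_boot all_order all_algebra.
From mathcomp Require Import boolp classical_sets reals.
Set Implicit Arguments. Unset Strict Implicit. Unset Printing Implicit Defensive.
Import Order.TTheory GRing.Theory Num.Theory.
Local Open Scope classical_set_scope.
Local Open Scope ring_scope.

Section Defs.
Context {R : realType} {d : nat}.
Notation vec := 'rV[R]_d.

Definition edot (u v : vec) : R := \sum_(i < d) u 0 i * v 0 i.
Definition enorm (u : vec) : R := Num.sqrt (edot u u).

Definition specnorm (H : 'M[R]_d) : R :=
  sup [set r | exists v : vec, enorm v <= 1 /\ r = enorm (v *m H)].

Definition cball (c : vec) (r : R) : set vec := [set y | enorm (y - c) <= r].

Definition is_closed_set (K : set vec) : Prop :=
  forall x, (forall e, 0 < e -> exists y, K y /\ enorm (y - x) < e) -> K x.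
Definition is_convex_set (K : set vec) : Prop :=
  forall x y (t : R), K x -> K y -> 0 <= t <= 1 -> K (t *: x + (1 - t) *: y).
Definition interior_pt (K : set vec) (x : vec) : Prop :=
  exists e, 0 < e /\ forall y, enorm (y - x) < e -> K y.
Definition boundary_pt (K : set vec) (x : vec) : Prop :=
  K x /\ ~ interior_pt K x.
Definition on_sphere (c : vec) (r : R) (x : vec) : Prop := enorm (x - c) = r.

Definition diam (K : set vec) : R :=
  sup [set r | exists x y, K x /\ K y /\ r = enorm (x - y)].

Definition convex_body0 (K : set vec) : Prop :=
  is_closed_set K /\ is_convex_set K /\ interior_pt K 0.

Definition centrally_fat (gamma : R) (K : set vec) : Prop :=
  exists r r', 0 < r /\ 0 < r' /\ cball 0 r `<=` K /\ K `<=` cball 0 r'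
               /\ gamma <= r / r'.

Definition smooth_body (sigma : R) (K : set vec) : Prop :=
  forall x, boundary_pt K x ->
    exists c, cball c (sigma * diam K / 2) `<=` K /\ on_sphere c (sigma * diam K / 2) x.

Definition scaling_dist (K : set vec) (p : vec) (x : vec) : R :=
  if x == p then 0 else inf [set r | 0 < r /\ K (r^-1 *: (x - p))].

Definition has_gradient (f : vec -> R) (x g : vec) : Prop :=
  forall e, 0 < e -> exists delta, 0 < delta /\
    forall y, enorm (y - x) < delta ->
      `|f y - f x - edot g (y - x)| <= e * enorm (y - x).

Definition has_jacobian (G : vec -> vec) (x : vec) (H : 'M[R]_d) : Prop :=
  forall e, 0 < e -> exists delta, 0 < delta /\
    forall y, enorm (y - x) < delta ->
      enorm (G y - G x - (y - x) *m H) <= e * enorm (y - x).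

Definition twice_diff_at (f : vec -> R) (x : vec) (G : vec -> vec) (H : 'M[R]_d) : Prop :=
  (exists delta, 0 < delta /\ forall y, enorm (y - x) < delta -> has_gradient f y (G y))
  /\ has_jacobian G x H.

End Defs.

From mathcomp Require Import all_boot all_order all_algebra.
From mathcomp Require Import boolp classical_sets reals.
From mathcomp Require Import ring lra.
Set Implicit Arguments. Unset Strict Implicit. Unset Printing Implicit Defensive.
Import Order.TTheory GRing.Theory Num.Theory.
Local Open Scope classical_set_scope.
Local Open Scope ring_scope.

(* Let f be the scaling distance, r and r' the radii of the balls about 0
   inside and around K.  For y <> p the point z = (y - p) / f y lies on the
   boundary of K, and smoothness gives a ball B of radius rho >= sigma r inside
   K touching it at z.  By convexity z - c is an outer normal of K at z, so
   n = (z - c) / <z - c, z> is a supporting slope of f at y with |n| <= 1/r.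
   Since B is inside K, f (y + h) is at most any s such that (y + h - p) / s
   lies in B; this gives f (y + h) <= f y + <n, h> + L/2 |h|^2 for small h,
   with L of order r'^2 / (sigma r^4 f x) near x.  A function squeezed at
   every point between an affine minorant and such a quadratic majorant has
   these slopes as gradients, and they are L-Lipschitz by the co-coercivity
   argument of convex optimisation; hence |Hf x| <= L.  Together with
   |x - p| <= r' f x and gamma r' <= r this yields tau = 6 / (gamma^2 sigma). *)

Section Euclid.
Context {R : realType} {d : nat}.
Notation vec := 'rV[R]_d.
Implicit Types u v w : vec.

Lemma edotC u v : edot u v = edot v u.
Proof. by apply: eq_bigr => i _; rewrite mulrC. Qed.

Lemma edotDl u v w : edot (u + v) w = edot u w + edot v w.
Proof. by rewrite /edot -big_split; apply: eq_bigr => i _; rewrite mxE mulrDl. Qed.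

Lemma edotZl a u v : edot (a *: u) v = a * edot u v.
Proof. by rewrite /edot mulr_sumr; apply: eq_bigr => i _; rewrite mxE mulrA. Qed.

Lemma edotNl u v : edot (- u) v = - edot u v.
Proof. by rewrite -scaleN1r edotZl mulN1r. Qed.

Lemma edotBl u v w : edot (u - v) w = edot u w - edot v w.
Proof. by rewrite edotDl edotNl. Qed.

Lemma edotDr u v w : edot u (v + w) = edot u v + edot u w.
Proof. by rewrite edotC edotDl !(edotC u). Qed.

Lemma edotZr a u v : edot u (a *: v) = a * edot u v.
Proof. by rewrite edotC edotZl edotC. Qed.

Lemma edotNr u v : edot u (- v) = - edot u v.
Proof. by rewrite edotC edotNl edotC. Qed.

Lemma edotBr u v w : edot u (v - w) = edot u v - edot u w.
Proof. by rewrite edotDr edotNr. Qed.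

Lemma edot0r u : edot u 0 = 0.
Proof. by rewrite -(scale0r (0 : vec)) edotZr mul0r. Qed.

Lemma edotxx_ge0 u : 0 <= edot u u.
Proof. by apply: sumr_ge0 => i _; rewrite -expr2 sqr_ge0. Qed.

Lemma edotxx_eq0 u : edot u u = 0 -> u = 0.
Proof.
move=> /eqP; rewrite psumr_eq0 => [/allP u0|i _]; last by rewrite -expr2 sqr_ge0.
apply/rowP => j; rewrite mxE.
by have /u0 := mem_index_enum j; rewrite /= mulf_eq0 orbb => /eqP.
Qed.

Lemma enorm_ge0 u : 0 <= enorm u.
Proof. exact: sqrtr_ge0. Qed.

Lemma enorm_sqr u : enorm u ^+ 2 = edot u u.
Proof. by rewrite sqr_sqrtr // edotxx_ge0. Qed.

Lemma enormZ a u : enorm (a *: u) = `|a| * enorm u.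
Proof.
by rewrite /enorm edotZl edotZr mulrA -expr2 sqrtrM ?sqr_ge0 // sqrtr_sqr.
Qed.

Lemma enormN u : enorm (- u) = enorm u.
Proof. by rewrite -scaleN1r enormZ normrN1 mul1r. Qed.

Lemma enorm0 : enorm (0 : vec) = 0.
Proof. by rewrite -(scale0r (0 : vec)) enormZ normr0 mul0r. Qed.

Lemma enorm_gt0 u : u != 0 -> 0 < enorm u.
Proof.
move=> u0; rewrite lt_def enorm_ge0 andbT; apply: contraNneq u0 => nu0.
by apply/eqP/edotxx_eq0; rewrite -enorm_sqr nu0 expr0n.
Qed.

Lemma enorm_sqrD u v :
  enorm (u + v) ^+ 2 = enorm u ^+ 2 + 2 * edot u v + enorm v ^+ 2.
Proof. by rewrite !enorm_sqr edotDl !edotDr (edotC v u); ring. Qed.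

Lemma edot_norm_le u v : `|edot u v| <= enorm u * enorm v.
Proof.
have [->|v0] := eqVneq v 0; first by rewrite edot0r enorm0 normr0 mulr0.
have vv0 : 0 < edot v v by rewrite -enorm_sqr exprn_gt0 ?enorm_gt0.
have := edotxx_ge0 (edot v v *: u - edot u v *: v).
rewrite !(edotBl, edotBr, edotZl, edotZr) (edotC v u) => uv_ge0.
have cs2 : edot u v ^+ 2 <= edot u u * edot v v.
  suff : 0 <= edot v v * (edot u u * edot v v - edot u v ^+ 2).
    by rewrite pmulr_rge0 // subr_ge0.
  nra.
rewrite -ler_sqr ?nnegrE ?mulr_ge0 ?enorm_ge0 //.
by rewrite real_normK ?num_real // exprMn !enorm_sqr.
Qed.

Lemma edot_le u v : edot u v <= enorm u * enorm v.
Proof. exact: le_trans (ler_norm _) (edot_norm_le u v). Qed.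

Lemma enormD u v : enorm (u + v) <= enorm u + enorm v.
Proof.
rewrite -ler_sqr ?nnegrE ?addr_ge0 ?enorm_ge0 // enorm_sqrD sqrrD.
by rewrite lerD2r lerD2l mulr_natl lerMn2r edot_le.
Qed.

Lemma enorm_normalize u : u != 0 -> enorm ((enorm u)^-1 *: u) = 1.
Proof. by move=> u0; rewrite enormZ gtr0_norm ?invr_gt0 ?enorm_gt0 // mulVf ?gt_eqF ?enorm_gt0. Qed.

Lemma enorm_scaleD_le u v (s : R) : 0 <= s ->
  enorm v ^+ 2 <= - (2 * s * edot u v) -> enorm (s *: u + v) <= s * enorm u.
Proof.
move=> s0 uv; rewrite -ler_sqr ?nnegrE ?mulr_ge0 ?enorm_ge0 //.
rewrite enorm_sqrD enormZ edotZl ger0_norm // exprMn; lra.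
Qed.

End Euclid.

Section QuadraticSandwich.
Context {R : realType} {d : nat}.
Notation vec := 'rV[R]_d.
Implicit Types (f : vec -> R) (x y g n : vec).

Definition quad_upper f (L D : R) y n :=
  forall h, enorm h <= D -> f (y + h) <= f y + edot n h + L / 2 * enorm h ^+ 2.

Definition quad_sandwich f (L D : R) y n :=
  (forall q, f y + edot n (q - y) <= f q) /\ quad_upper f L D y n.

Lemma has_gradient_ge_half f x g : has_gradient f x g -> 0 < f x ->
  exists2 e, 0 < e & forall y, enorm (y - x) < e -> f x / 2 <= f y.
Proof.
move=> fg fx0; have [e1 [e10 fge]] := fg 1 ltr01.
have g1 : 0 < enorm g + 1 by rewrite ltr_wpDl ?enorm_ge0.
exists (Num.min e1 (f x / (2 * (enorm g + 1)))) => [|y].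
  by rewrite lt_min e10 divr_gt0 ?mulr_gt0.
rewrite lt_min => /andP[/fge]; rewrite mul1r ler_norml => /andP[fy _].
rewrite ltr_pdivlMr ?mulr_gt0 // => yx.
have := edot_norm_le g (y - x); rewrite ler_norml => /andP[+ _]; nra.
Qed.

Lemma gradient_eq_quad_upper f y g n (L D : R) : 0 < D -> 0 <= L ->
  has_gradient f y g -> quad_upper f L D y n -> g = n.
Proof.
move=> D0 L0 fg up; apply/eqP; rewrite -subr_eq0; apply/negP => /negP gn.
set u := g - n; set b := enorm u.
have b0 : 0 < b := enorm_gt0 gn.
have [del [del0 fge]] := fg (b / 4) (divr_gt0 b0 (ltr0n _ 4)).
have L1 : 0 < 2 * L + 1 by rewrite ltr_wpDl ?mulr_ge0.
set eps := Num.min (del / (2 * b)) (Num.min (D / b) (1 / (2 * L + 1))).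
have eps0 : 0 < eps by rewrite !lt_min !divr_gt0 ?mulr_gt0.
have [eps_del eps_D eps_L] : [/\ eps * b < del, eps * b <= D & L * eps <= 1 / 2].
  have := lexx eps; rewrite {2}/eps !le_min => /and3P[].
  rewrite !ler_pdivlMr ?mulr_gt0 // => e1 e2 e3.
  split => //; [rewrite mulrA in e1 | rewrite mulrDr mulr1 in e3]; lra.
set h := eps *: u.
have nh : enorm h = eps * b by rewrite enormZ gtr0_norm.
have := fge (y + h); rewrite addrAC subrr add0r nh => /(_ eps_del).
rewrite ler_norml => /andP[low _].
have := up h; rewrite nh => /(_ eps_D) upp.
have gnh : edot g h - edot n h = eps * b ^+ 2.
  by rewrite -edotBl edotZr -/u -/b enorm_sqr.
have eb0 : 0 < eps * b ^+ 2 by rewrite mulr_gt0 ?exprn_gt0.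
have : L * eps * (eps * b ^+ 2) <= 1 / 2 * (eps * b ^+ 2) by rewrite ler_pM2r.
have eL : L / 2 * (eps * b) ^+ 2 = L * eps * (eps * b ^+ 2) / 2 by rewrite exprMn expr2; field.
have eb : b / 4 * (eps * b) = eps * b ^+ 2 / 4 by rewrite expr2; field.
rewrite eL in upp; rewrite eb in low; lra.
Qed.

Lemma quad_sandwich_cocoercive f (L D tau : R) x y nx ny :
  0 < tau -> L * tau <= 1 -> tau * enorm (ny - nx) <= D ->
  quad_sandwich f L D x nx -> quad_sandwich f L D y ny ->
  tau * enorm (ny - nx) <= enorm (y - x).
Proof.
move=> tau0 Ltau uD [lx ux] [ly uy].
move: uD; set u := ny - nx; set b := enorm u => uD.
have b0 : 0 <= b := enorm_ge0 u.
have tuD : enorm (tau *: u) <= D by rewrite enormZ gtr0_norm.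
(* Add the four bounds at the points x + tau u and y - tau u. *)
have A1 := lx (y - tau *: u).
have ntuD : enorm (- (tau *: u)) <= D by rewrite enormN.
have A2 := uy _ ntuD.
have A3 := ly (x + tau *: u).
have A4 := ux _ tuD.
rewrite addrAC edotBr edotZr in A1.
rewrite addrAC -[x - y]opprB edotDr edotNr edotZr in A3.
rewrite edotNr edotZr enormN enormZ gtr0_norm // in A2.
rewrite edotZr enormZ gtr0_norm // in A4.
have nu : edot ny u - edot nx u = b ^+ 2 by rewrite -edotBl enorm_sqr.
have nyx : edot ny (y - x) - edot nx (y - x) = edot u (y - x) by rewrite edotBl.
have key : tau * b ^+ 2 * (2 - L * tau) <= b * enorm (y - x).
  apply: le_trans (edot_le u (y - x)); rewrite -nyx -/b in A2 A4 *.
  have : tau * edot ny u - tau * edot nx u = tau * b ^+ 2 by rewrite -mulrBr nu.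
  nra.
have {key} : b * (tau * b) <= b * enorm (y - x).
  apply: le_trans key; rewrite mulrCA -expr2 ler_peMr ?mulr_ge0 ?sqr_ge0 ?(ltW tau0) //; lra.
have [->|b_gt0] := eqVneq b 0; first by rewrite mulr0 enorm_ge0.
by rewrite ler_pM2l // lt_def b_gt0.
Qed.

Lemma quad_sandwich_lipschitz f (L D : R) x y nx ny : 0 < L ->
  quad_sandwich f L D x nx -> quad_sandwich f L D y ny -> enorm (y - x) < D ->
  enorm (ny - nx) <= L * enorm (y - x).
Proof.
move=> L0 sx sy yxD; have D0 : 0 < D := le_lt_trans (enorm_ge0 _) yxD.
have [bLD|LDb] := lerP (enorm (ny - nx)) (L * D).
  have iL0 : 0 < L^-1 by rewrite invr_gt0.
  have := quad_sandwich_cocoercive iL0 _ _ sx sy.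
  rewrite mulfV ?gt_eqF // mulrC ler_pdivrMr // [D * L]mulrC => /(_ (lexx _) bLD).
  by rewrite ler_pdivrMr // mulrC.
have b0 : 0 < enorm (ny - nx) := le_lt_trans (mulr_ge0 (ltW L0) (ltW D0)) LDb.
have := quad_sandwich_cocoercive (tau := D / enorm (ny - nx)) (divr_gt0 D0 b0) _ _ sx sy.
rewrite divfK ?gt_eqF // mulrA ler_pdivrMr // mul1r => /(_ (ltW LDb) (lexx _)).
by rewrite leNgt yxD.
Qed.

Lemma specnorm_le_lipschitz (G : vec -> vec) x (H : 'M[R]_d) (L D : R) :
  0 <= L -> 0 < D -> has_jacobian G x H ->
  (forall y, enorm (y - x) < D -> enorm (G y - G x) <= L * enorm (y - x)) ->
  specnorm H <= L.
Proof.
move=> L0 D0 GH lip; apply: ge_sup => [|_ [v [v1 ->]]].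
  by exists 0, 0; rewrite mul0mx enorm0 ler01.
apply/ler_addgt0Pr => e e0; have [del [del0 GHe]] := GH e e0.
set s := Num.min D del / 2.
have s0 : 0 < s by rewrite divr_gt0 // lt_min D0.
have [sD sdel] : s < D /\ s < del.
  by have := lexx (Num.min D del); rewrite le_min => /andP[]; rewrite /s; split; lra.
have yx : x + s *: v - x = s *: v by rewrite addrAC subrr add0r.
have sv : enorm (s *: v) <= s by rewrite enormZ gtr0_norm // ger_pMr.
have := GHe (x + s *: v); rewrite yx => /(_ (le_lt_trans sv sdel)).
have := lip (x + s *: v); rewrite yx => /(_ (le_lt_trans sv sD)).
set dG := G (x + s *: v) - G x => GL GHs.
have : enorm ((s *: v) *m H) <= (L + e) * enorm (s *: v).
  rewrite -[_ *m H](subKr dG).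
  by apply: le_trans (enormD _ _) _; rewrite enormN mulrDl lerD.
rewrite -scalemxAl !enormZ gtr0_norm // mulrCA ler_pM2l // => /le_trans; apply.
by rewrite ler_piMr ?addr_ge0 ?(ltW e0).
Qed.
End QuadraticSandwich.

Section ScalingDist.
Context {R : realType} {d : nat}.
Notation vec := 'rV[R]_d.
Implicit Types (x : vec) (s : R).
Variables (K : set vec) (p : vec).
Notation f := (scaling_dist K p).
Notation scales x := [set s | 0 < s /\ K (s^-1 *: (x - p))].

Lemma scaling_distE x : x != p -> f x = inf (scales x).
Proof. by rewrite /scaling_dist => /negbTE ->. Qed.

Lemma scaling_dist_le x s : 0 < s -> K (s^-1 *: (x - p)) -> f x <= s.
Proof.
move=> s0 Ks; have [->|xp] := eqVneq x p; first by rewrite /scaling_dist eqxx ltW.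
by rewrite scaling_distE //; apply: ge_inf; [exists 0 => t [/ltW] | split].
Qed.

Variables (r r' : R).
Hypotheses (r0 : 0 < r) (r'0 : 0 < r') (Kr : cball 0 r `<=` K) (Kr' : K `<=` cball 0 r').

Lemma has_inf_scales x : x != p -> has_inf (scales x).
Proof.
move=> xp; split; last by exists 0 => t [/ltW].
have nw : 0 < enorm (x - p) by rewrite enorm_gt0 // subr_eq0.
exists (enorm (x - p) / r); split; first by rewrite divr_gt0.
apply: Kr; rewrite /cball /= subr0 enormZ invf_div ger0_norm ?divr_ge0 ?enorm_ge0 ?(ltW r0) //.
by rewrite divfK ?gt_eqF.
Qed.

Lemma scaling_dist_ge x a : x != p ->
  (forall s, 0 < s -> K (s^-1 *: (x - p)) -> a <= s) -> a <= f x.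
Proof.
move=> xp ub; rewrite scaling_distE //; apply: lb_le_inf.
  by case: (has_inf_scales xp).
by move=> s [s0 Ks]; apply: ub.
Qed.

Lemma enorm_le_scaling_dist x : enorm (x - p) <= r' * f x.
Proof.
have [->|xp] := eqVneq x p; first by rewrite /scaling_dist eqxx subrr enorm0 mulr0.
rewrite mulrC -ler_pdivrMr //; apply: scaling_dist_ge => // s s0 /Kr'.
by rewrite /cball /= subr0 enormZ gtr0_norm ?invr_gt0 // ler_pdivrMr // ler_pdivrMl // mulrC.
Qed.

Lemma inner_radius_le (u : vec) : enorm u = 1 -> r <= r'.
Proof.
move=> u1; have : cball 0 r (r *: u) by rewrite /cball /= subr0 enormZ u1 mulr1 gtr0_norm.
by move=> /Kr /Kr'; rewrite /cball /= subr0 enormZ u1 mulr1 gtr0_norm.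
Qed.

Lemma diam_ge_inner (u : vec) : enorm u = 1 -> 2 * r <= diam K.
Proof.
move=> u1; have Kru (a : R) : `|a| <= 1 -> K ((a * r) *: u).
  by move=> a1; apply: Kr; rewrite /cball /= subr0 enormZ u1 mulr1 normrM
    (gtr0_norm r0) ger_pMl.
apply: ub_le_sup.
  exists (2 * r') => _ [a [b [/Kr' Ka [/Kr' Kb ->]]]].
  move: Ka Kb; rewrite /cball /= !subr0 => Ka Kb.
  by apply: le_trans (enormD _ _) _; rewrite enormN; lra.
have := Kru 1; have := Kru (-1); rewrite mul1r mulN1r normrN1 normr1 => KN K1.
exists (r *: u), (- r *: u); split; first exact: K1.
split; first exact: KN.
by rewrite -scalerBl opprK enormZ u1 mulr1 ger0_norm ?addr_ge0 ?(ltW r0) //; lra.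
Qed.

Lemma scaling_dist_gt0 x : x != p -> 0 < f x.
Proof.
move=> xp; rewrite -(pmulr_rgt0 _ r'0).
by apply: lt_le_trans (enorm_le_scaling_dist x); rewrite enorm_gt0 // subr_eq0.
Qed.

Lemma scaling_dist_mem x : is_closed_set K -> x != p -> K ((f x)^-1 *: (x - p)).
Proof.
move=> cK xp; set t := f x; set w := x - p.
have t0 : 0 < t := scaling_dist_gt0 xp.
have w1 : 0 < enorm w + 1 by rewrite ltr_wpDl ?enorm_ge0.
apply: cK => e e0.
have eps0 : 0 < e * t ^+ 2 / (enorm w + 1) by rewrite !mulr_gt0 ?invr_gt0.
have [s [s0 Ks]] := inf_adherent eps0 (has_inf_scales xp).
rewrite -scaling_distE // -/t => st.
have ts : t <= s := scaling_dist_le s0 Ks.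
exists (s^-1 *: w); split => //; rewrite -scalerBl.
have -> : s^-1 - t^-1 = - ((s - t) / (s * t)) by field; rewrite !gt_eqF.
rewrite enormZ normrN ger0_norm ?divr_ge0 ?subr_ge0 ?mulr_ge0 ?(ltW s0) ?(ltW t0) //.
rewrite mulrAC ltr_pdivrMr ?mulr_gt0 //.
move: st; rewrite -ltrBlDl ltr_pdivlMr // => st.
have : e * t * t <= e * t * s by rewrite ler_pM2l ?mulr_gt0.
have := enorm_ge0 w; nra.
Qed.

Lemma scaling_dist_not_interior x : x != p ->
  ~ interior_pt K ((f x)^-1 *: (x - p)).
Proof.
move=> xp [e [e0 inK]]; set t := f x; set z := t^-1 *: (x - p).
have t0 : 0 < t := scaling_dist_gt0 xp.
have z1 : 0 < enorm z + 1 by rewrite ltr_wpDl ?enorm_ge0.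
set eta := e / (2 * (enorm z + 1)).
have eta0 : 0 < eta by rewrite divr_gt0 ?mulr_gt0.
have Kz : K ((1 + eta) *: z).
  apply: inK; rewrite scalerDl scale1r addrAC subrr add0r enormZ gtr0_norm //.
  rewrite /eta mulrAC ltr_pdivrMr ?mulr_gt0 //; have := enorm_ge0 z; nra.
have : t <= t / (1 + eta).
  apply: scaling_dist_le; first by rewrite divr_gt0 // ltr_wpDl ?ltW.
  by rewrite invf_div -scalerA.
rewrite ler_pdivlMr ?ltr_wpDl ?(ltW eta0) // mulrDr mulr1 gerDl.
by rewrite leNgt mulr_gt0.
Qed.

End ScalingDist.

Section TouchingBall.
Context {R : realType} {d : nat}.
Notation vec := 'rV[R]_d.
Implicit Types (c v z : vec) (K : set vec).

Lemma convex_cball_hull K c v rho lam : is_convex_set K -> cball c rho `<=` K ->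
  K v -> 0 <= lam < 1 ->
  cball ((1 - lam) *: c + lam *: v) ((1 - lam) * rho) `<=` K.
Proof.
move=> cvx Kc Kv /andP[lam0 lam1] q; rewrite /cball /= => qw.
have lam1' : 0 < 1 - lam by rewrite subr_gt0.
have -> : q = (1 - lam) *: ((1 - lam)^-1 *: (q - lam *: v)) + (1 - (1 - lam)) *: v.
  by apply/rowP => i; rewrite !mxE; field; rewrite gt_eqF.
apply: cvx => //; last by rewrite ltW //= gerBl.
apply: Kc; rewrite /cball /=.
have -> : (1 - lam)^-1 *: (q - lam *: v) - c
    = (1 - lam)^-1 *: (q - ((1 - lam) *: c + lam *: v)).
  by apply/rowP => i; rewrite !mxE; field; rewrite gt_eqF.
by rewrite enormZ gtr0_norm ?invr_gt0 // ler_pdivrMl.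
Qed.

Lemma touching_ball_normal K c z rho : is_convex_set K -> cball c rho `<=` K ->
  enorm (z - c) = rho -> ~ interior_pt K z ->
  forall v, K v -> edot (z - c) v <= edot (z - c) z.
Proof.
move=> cvx Kc zc zK v Kv; rewrite leNgt; apply/negP => zv.
set beta := edot (z - c) (v - z).
have beta0 : 0 < beta by rewrite /beta edotBr subr_gt0.
set k2 := enorm (z - v) ^+ 2.
have k2b : 0 < k2 + 2 * beta by rewrite ltr_wpDl ?sqr_ge0 ?mulr_gt0.
(* Otherwise, for lam small enough that lam |z - v|^2 < 2 (1 - lam) beta, z is
   interior to the ball of the convex hull of v and cball c rho centred at
   (1 - lam) c + lam v. *)
set lam := beta / (k2 + 2 * beta).
have lam0 : 0 < lam by rewrite divr_gt0.
have lam1 : lam < 1.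
  by rewrite ltr_pdivrMr // mul1r; have : 0 <= k2 := sqr_ge0 _; lra.
have lamk : lam * (k2 + 2 * beta) = beta by rewrite divfK ?gt_eqF.
set w := (1 - lam) *: c + lam *: v.
have zw : z - w = (1 - lam) *: (z - c) + lam *: (z - v).
  by apply/rowP => i; rewrite !mxE; ring.
have zw2 : enorm (z - w) ^+ 2 < ((1 - lam) * rho) ^+ 2.
  rewrite zw enorm_sqrD !enormZ edotZl edotZr zc !exprMn -/k2.
  have -> : edot (z - c) (z - v) = - beta by rewrite /beta -edotNr opprB.
  rewrite !ger0_norm ?subr_ge0 ?(ltW lam1) ?(ltW lam0) //.
  have : lam * (lam * (k2 + 2 * beta)) < lam * (2 * beta) by rewrite lamk ltr_pM2l ?ltr_pMl ?ltr1n.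
  nra.
have zw1 : enorm (z - w) < (1 - lam) * rho.
  by rewrite -ltr_sqr ?nnegrE ?enorm_ge0 // mulr_ge0 ?subr_ge0 ?(ltW lam1) // -zc enorm_ge0.
apply: zK; exists ((1 - lam) * rho - enorm (z - w)); split; first by rewrite subr_gt0.
move=> q qz; apply: (convex_cball_hull (lam := lam) cvx Kc Kv).
  by rewrite (ltW lam0).
rewrite /cball /= -(subrK z q) -addrA.
by apply: le_trans (enormD _ _) _; rewrite -lerBrDr ltW.
Qed.

Lemma touching_ball_normal_ge K c z rho r : is_convex_set K -> 0 < rho ->
  cball c rho `<=` K -> enorm (z - c) = rho -> ~ interior_pt K z ->
  0 <= r -> cball 0 r `<=` K -> r * rho <= edot (z - c) z.
Proof.
move=> cvx rho0 Kc zc zK r0 Kr.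
have Kv : K ((r / rho) *: (z - c)).
  by apply: Kr; rewrite /cball /= subr0 enormZ zc ger0_norm ?divr_ge0 ?(ltW rho0) ?divfK ?gt_eqF.
apply: le_trans (touching_ball_normal cvx Kc zc zK Kv).
by rewrite edotZr -enorm_sqr zc expr2 mulrA divfK ?gt_eqF.
Qed.

End TouchingBall.

Section HessianConstants.
Context {R : realType}.
Variables (r r' sigma T : R).
Hypotheses (r0 : 0 < r) (rr' : r <= r') (sigma0 : 0 < sigma) (T0 : 0 < T).

Definition hess_bound := 36 * r' ^+ 2 / (T * sigma * r ^+ 4).
Definition hess_radius := Num.min (T * r / 4) (2 / (r * hess_bound)).
Notation L := hess_bound.

Lemma hess_bound_gt0 : 0 < L.
Proof. by rewrite divr_gt0 ?mulr_gt0 ?exprn_gt0 // (lt_le_trans r0). Qed.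

Lemma hess_radius_gt0 : 0 < hess_radius.
Proof. by rewrite lt_min; apply/andP; split; rewrite divr_gt0 // mulr_gt0 // hess_bound_gt0. Qed.

Lemma hess_bound_step (t beta nu a : R) :
  T / 2 <= t -> sigma * r ^+ 2 <= beta -> r * `|nu| <= a -> 0 <= a <= hess_radius ->
  T / 4 <= t + (nu + L / 2 * a ^+ 2) /\
  (a + `|nu + L / 2 * a ^+ 2| * r') ^+ 2 <= (t + (nu + L / 2 * a ^+ 2)) * beta * L * a ^+ 2.
Proof.
move=> Tt beta_ge nua /andP[a0]; rewrite le_min => /andP[].
have L0 := hess_bound_gt0.
rewrite !ler_pdivlMr ?(mulr_gt0 r0 L0) //.
move=> aT aL; set q := L / 2 * a ^+ 2; set del := nu + q.
have q0 : 0 <= q := mulr_ge0 (divr_ge0 (ltW L0) (ler0n _ 2)) (sqr_ge0 a).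
have rq : r * q <= a.
  have : a * (a * (r * L)) <= a * 2 by rewrite ler_wpM2l.
  by rewrite /q; lra.
have rdel : r * `|del| <= 2 * a.
  have := ler_normD nu q; rewrite (ger0_norm q0) => dq.
  by have := ler_wpM2l (ltW r0) dq; lra.
have s_ge : T / 4 <= t + del.
  rewrite -(ler_pM2l r0); have := ler_norm (- nu); rewrite normrN => /(ler_wpM2l (ltW r0)).
  have := ler_wpM2l (ltW r0) Tt; have := mulr_ge0 (ltW r0) q0; rewrite /del; lra.
split => //.
have ga : r * (a + `|del| * r') <= 3 * r' * a.
  have := ler_wpM2r a0 rr'; have := ler_wpM2r (ltW (lt_le_trans r0 rr')) rdel; lra.
have LT : L * (T * sigma * r ^+ 4) = 36 * r' ^+ 2.
  by rewrite divfK // gt_eqF // !mulr_gt0 ?exprn_gt0.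
have sb : T / 4 * (sigma * r ^+ 2) <= (t + del) * beta.
  by apply: ler_pM => //; [rewrite divr_ge0 ?(ltW T0) | rewrite mulr_ge0 ?sqr_ge0 ?(ltW sigma0)].
rewrite -(ler_pM2l (exprn_gt0 2 r0)) -exprMn.
apply: le_trans (_ : (3 * r' * a) ^+ 2 <= _).
  have ga0 : 0 <= r * (a + `|del| * r').
    by rewrite mulr_ge0 ?addr_ge0 ?mulr_ge0 ?(ltW r0) ?(ltW (lt_le_trans r0 rr')).
  by rewrite ler_sqr ?nnegrE // (le_trans ga0 ga).
have := ler_wpM2r (mulr_ge0 (ltW L0) (sqr_ge0 (r * a))) sb.
have -> : T / 4 * (sigma * r ^+ 2) * (L * (r * a) ^+ 2) = L * (T * sigma * r ^+ 4) * a ^+ 2 / 4.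
  by ring.
by rewrite LT; congr (_ <= _); field.
Qed.

End HessianConstants.

Section ScalingDistQuadratic.
Context {R : realType} {d : nat}.
Notation vec := 'rV[R]_d.
Implicit Types (x y q h : vec).
Variables (K : set vec) (p : vec) (r r' sigma : R).
Hypotheses (r0 : 0 < r) (rr' : r <= r') (sigma0 : 0 < sigma).
Hypotheses (cbK : convex_body0 K) (smK : smooth_body sigma K).
Hypotheses (Kr : cball 0 r `<=` K) (Kr' : K `<=` cball 0 r').
Notation f := (scaling_dist K p).
Let r'0 : 0 < r' := lt_le_trans r0 rr'.

Section TouchingPoint.
Variables (y c : vec) (rho : R).
Let t := f y.
Let z := t^-1 *: (y - p).
Hypotheses (yp : y != p) (rho_ge : sigma * r <= rho).
Hypotheses (Kc : cball c rho `<=` K) (zc : enorm (z - c) = rho).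
Let beta := edot (z - c) z.
Let n := beta^-1 *: (z - c).

Let t0 : 0 < t := scaling_dist_gt0 r0 r'0 Kr Kr' yp.

Let rho0 : 0 < rho := lt_le_trans (mulr_gt0 sigma0 r0) rho_ge.

Let cvxK : is_convex_set K := cbK.2.1.
Let z_not_interior : ~ interior_pt K z := scaling_dist_not_interior r0 r'0 Kr Kr' yp.

Let beta_ge : r * rho <= beta.
Proof. exact: touching_ball_normal_ge cvxK rho0 Kc zc z_not_interior (ltW r0) Kr. Qed.

Let beta0 : 0 < beta := lt_le_trans (mulr_gt0 r0 rho0) beta_ge.

Let yp_scale : y - p = t *: z.
Proof. by rewrite /z scalerA divff ?gt_eqF // scale1r. Qed.

Let normal_le : enorm n <= 1 / r.
Proof.
rewrite enormZ zc gtr0_norm ?invr_gt0 // ler_pdivlMr // -mulrA mulrC ler_pdivrMr //.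
by rewrite mul1r mulrC.
Qed.

Let normal_yp : edot n (y - p) = t.
Proof. by rewrite yp_scale edotZr edotZl -/beta mulVf ?gt_eqF // mulr1. Qed.

Let normal_le_scaling_dist q : edot n (q - p) <= f q.
Proof.
have [->|qp] := eqVneq q p; first by rewrite subrr edot0r /scaling_dist eqxx.
apply: (scaling_dist_ge r0 Kr qp) => s s0 Ks.
have := touching_ball_normal cvxK Kc zc z_not_interior Ks.
by rewrite edotZr edotZl -/beta !ler_pdivrMl // mulrC.
Qed.

Let normal_support q : t + edot n (q - y) <= f q.
Proof.
have -> : q - y = (q - p) - (y - p) by rewrite opprB addrA subrK.
by rewrite edotBr normal_yp addrCA subrr addr0 normal_le_scaling_dist.
Qed.

Let z_le : enorm z <= r'.
Proof.
have /Kr' : K z := scaling_dist_mem r0 r'0 Kr Kr' cbK.1 yp.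
by rewrite /cball /= subr0.
Qed.

Let normal_upper (T : R) h : 0 < T -> T / 2 <= t ->
  enorm h <= hess_radius r r' sigma T ->
  f (y + h) <= t + edot n h + hess_bound r r' sigma T / 2 * enorm h ^+ 2.
Proof.
move=> T0 Tt hD; set L := hess_bound r r' sigma T.
set a := enorm h; set nu := edot n h.
have nua : r * `|nu| <= a.
  have rn : r * enorm n <= 1 by rewrite mulrC -ler_pdivlMr // normal_le.
  apply: le_trans (ler_wpM2l (ltW r0) (edot_norm_le n h)) _.
  by rewrite mulrA ler_piMl ?enorm_ge0.
have beta_ge2 : sigma * r ^+ 2 <= beta.
  by apply: le_trans beta_ge; rewrite expr2 mulrA mulrC ler_pM2l.
have a_rng : 0 <= a <= hess_radius r r' sigma T by rewrite enorm_ge0.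
have [s_ge key] := hess_bound_step r0 rr' sigma0 T0 Tt beta_ge2 nua a_rng.
move: s_ge key; rewrite -/L -/a; set del := nu + L / 2 * a ^+ 2 => s_ge key.
have s0 : 0 < t + del by apply: lt_le_trans s_ge; rewrite divr_gt0.
(* The bound t + del is attained by a point of the touching ball. *)
rewrite -addrA; apply: scaling_dist_le => //; apply: Kc; rewrite /cball /=.
have -> : (t + del)^-1 *: (y + h - p) - c
    = (t + del)^-1 *: ((t + del) *: (z - c) + (h - del *: z)).
  by rewrite addrAC yp_scale; apply/rowP => i; rewrite !mxE; field; rewrite !gt_eqF.
rewrite enormZ gtr0_norm ?invr_gt0 // ler_pdivrMl // -zc.
apply: enorm_scaleD_le; first exact: ltW.
have -> : edot (z - c) (h - del *: z) = - (beta * (L / 2 * a ^+ 2)).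
  by rewrite edotBr edotZr -/beta /del /nu edotZl; field; rewrite gt_eqF.
have -> : - (2 * (t + del) * - (beta * (L / 2 * a ^+ 2))) = (t + del) * beta * L * a ^+ 2.
  by field.
apply: le_trans key; rewrite ler_sqr ?nnegrE ?addr_ge0 ?mulr_ge0 ?enorm_ge0 ?(ltW r'0) //.
apply: le_trans (enormD _ _) _; rewrite enormN enormZ lerD2l.
by apply: ler_wpM2l; [exact: normr_ge0 | exact: z_le].
Qed.

Lemma touching_quad_sandwich (T : R) : 0 < T -> T / 2 <= f y ->
  exists n, enorm n <= 1 / r /\
    quad_sandwich f (hess_bound r r' sigma T) (hess_radius r r' sigma T) y n.
Proof.
move=> T0 Tt; exists n; split; first exact: normal_le.
by split => [q|h]; [apply: normal_support | apply: normal_upper].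
Qed.

End TouchingPoint.

Lemma scaling_dist_quad_sandwich (T : R) y : 0 < T -> T / 2 <= f y ->
  exists n, enorm n <= 1 / r /\
    quad_sandwich f (hess_bound r r' sigma T) (hess_radius r r' sigma T) y n.
Proof.
move=> T0 Tt; have yp : y != p.
  by apply: contraTneq Tt => ->; rewrite /scaling_dist eqxx -ltNge divr_gt0.
have [c [Kc zc]] := smK (conj (scaling_dist_mem r0 r'0 Kr Kr' cbK.1 yp)
  (scaling_dist_not_interior r0 r'0 Kr Kr' yp)).
apply: (touching_quad_sandwich yp _ Kc zc T0 Tt).
have /enorm_normalize u1 : y - p != 0 by rewrite subr_eq0.
have := diam_ge_inner r0 Kr Kr' u1.
by rewrite -mulrA ler_pM2l // ler_pdivlMr // mulrC.
Qed.

Lemma scaling_dist_hessian_bound x G H : x != p -> twice_diff_at f x G H ->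
  enorm (G x) <= 1 / r /\ specnorm H <= hess_bound r r' sigma (f x).
Proof.
move=> xp [[e1 [e10 fG]] GH]; set T := f x.
have T0 : 0 < T := scaling_dist_gt0 r0 r'0 Kr Kr' xp.
set L := hess_bound r r' sigma T; set D := hess_radius r r' sigma T.
have L0 : 0 < L := hess_bound_gt0 r0 rr' sigma0 T0.
have D0 : 0 < D := hess_radius_gt0 r0 rr' sigma0 T0.
have fGx : has_gradient f x (G x) by apply: fG; rewrite subrr enorm0.
have [e2 e20 fx_half] := has_gradient_ge_half fGx T0.
set e := Num.min e1 (Num.min e2 D).
have e0 : 0 < e by rewrite lt_min e10 lt_min e20 D0.
have sandwich y : enorm (y - x) < e ->
    enorm (G y) <= 1 / r /\ quad_sandwich f L D y (G y).
  rewrite lt_min => /andP[y1]; rewrite lt_min => /andP[y2 _].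
  have [n [n_le [lo up]]] := scaling_dist_quad_sandwich T0 (fx_half y y2).
  by rewrite (gradient_eq_quad_upper D0 (ltW L0) (fG y y1) up).
have := sandwich x; rewrite subrr enorm0 => /(_ e0) [Gx_le Gx_sw].
split => //; apply: (specnorm_le_lipschitz (ltW L0) e0 GH) => y ye.
apply: (quad_sandwich_lipschitz L0 Gx_sw (sandwich y ye).2).
by move: ye; rewrite lt_min => /andP[_]; rewrite lt_min => /andP[].
Qed.

End ScalingDistQuadratic.

Lemma admissible_const_bounds {R : realType} (gamma sigma r r' T : R) :
  0 < gamma -> gamma <= 1 -> 0 < sigma -> sigma <= 1 ->
  0 < r -> 0 < r' -> 0 < T -> gamma <= r / r' ->
  1 / r * (r' * T) <= 6 / (gamma ^+ 2 * sigma) * T /\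
  hess_bound r r' sigma T * (r' * T) ^+ 2 <= (6 / (gamma ^+ 2 * sigma)) ^+ 2 * T.
Proof.
move=> g0 g1 s0 s1 r0 r'0 T0; rewrite ler_pdivlMr // => gr.
have frac_le (a b c e : R) : 0 < b -> 0 < e -> a * e <= c * b -> a / b <= c / e.
  by move=> b0 e0; rewrite ler_pdivrMr // mulrAC ler_pdivlMr.
have gs1 : gamma * sigma <= 1 := mulr_ile1 (ltW g0) (ltW s0) g1 s1.
split.
  have -> : 1 / r * (r' * T) = r' * T / r by rewrite mul1r mulrC.
  rewrite [6 / _ * T]mulrAC; apply: frac_le; rewrite ?mulr_gt0 ?exprn_gt0 //.
  have := ler_pM (mulr_ge0 (ltW g0) (ltW r'0)) (mulr_ge0 (ltW g0) (ltW s0)) gr gs1.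
  rewrite -(ler_pM2r T0); nra.
have -> : hess_bound r r' sigma T * (r' * T) ^+ 2 = 36 * T * r' ^+ 4 / (sigma * r ^+ 4).
  by rewrite /hess_bound; field; rewrite !gt_eqF.
have -> : (6 / (gamma ^+ 2 * sigma)) ^+ 2 * T = 36 * T / (gamma ^+ 4 * sigma ^+ 2).
  by field; rewrite !gt_eqF.
apply: frac_le; rewrite ?mulr_gt0 ?exprn_gt0 //.
have : (gamma * r') ^+ 4 * sigma ^+ 2 <= r ^+ 4 * sigma.
  have gr0 : 0 <= gamma * r' := mulr_ge0 (ltW g0) (ltW r'0).
  apply: ler_pM; rewrite ?exprn_ge0 ?sqr_ge0 ?(ltW s0) //; last by rewrite expr2 ger_pMr.
  by rewrite lerXn2r ?nnegrE // ltW.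
move=> /(ler_wpM2l (mulr_ge0 (ler0n _ 36) (ltW T0))).
have -> : 36 * T * r' ^+ 4 * (gamma ^+ 4 * sigma ^+ 2)
  = 36 * T * ((gamma * r') ^+ 4 * sigma ^+ 2) by ring.
by rewrite [sigma * _]mulrC.
Qed.

Unset Implicit Arguments.

Theorem lemma5 (R : realType) (gamma sigma : R) :
  0 < gamma -> gamma <= 1 -> 0 < sigma -> sigma <= 1 ->
  exists tau : R,
    forall (d : nat) (K : set 'rV[R]_d) (p : 'rV[R]_d),
      convex_body0 K -> centrally_fat gamma K -> smooth_body sigma K ->
      forall (x : 'rV[R]_d) (G : 'rV[R]_d -> 'rV[R]_d) (H : 'M[R]_d),
        x != p -> twice_diff_at (scaling_dist K p) x G H ->
        enorm (G x) * enorm (x - p) <= tau * scaling_dist K p x /\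
        specnorm H * enorm (x - p) ^+ 2 <= tau ^+ 2 * scaling_dist K p x.
Proof.
move=> g0 g1 s0 s1; exists (6 / (gamma ^+ 2 * sigma)).
move=> d K p cbK [r [r' [r0 [r'0 [Kr [Kr' fat]]]]]] smK x G H xp fH.
have /enorm_normalize u1 : x - p != 0 by rewrite subr_eq0.
have rr' := inner_radius_le r0 Kr Kr' u1.
have [Gx_le H_le] := scaling_dist_hessian_bound r0 rr' s0 cbK smK Kr Kr' xp fH.
have xp_le := enorm_le_scaling_dist p r0 r'0 Kr Kr' x.
have T0 := scaling_dist_gt0 r0 r'0 Kr Kr' xp.
have [tau1 tau2] := admissible_const_bounds g0 g1 s0 s1 r0 r'0 T0 fat.
split; first by apply: le_trans tau1; apply: ler_pM; rewrite ?enorm_ge0.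
apply: le_trans tau2; apply: le_trans (ler_wpM2r (sqr_ge0 _) H_le) _.
rewrite ler_wpM2l ?(ltW (hess_bound_gt0 r0 rr' s0 T0)) //.
by rewrite lerXn2r ?nnegrE ?enorm_ge0 ?mulr_ge0 ?(ltW r'0) ?(ltW T0).
Qed.
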